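(* Let $n\ge2$, let $r_1,r_2>0$ and let $u,v\in S^{n-1}$ be such that $u$ is not parallel to $v$. Then $C^{-}(u,r_1)\cap C^{-}(v,r_2)\in\mathcal{C}_e^n$.
   Context: For $x,y\in\mathbb{R}^n$ let $[x,y]=\sqrt{|x|^2|y|^2-(x\cdot y)^2}$. For $u\in S^{n-1}$ and $r>0$, the closed solid cylinder with axis $\{tu:t\in\mathbb{R}\}$ and base radius $r$ is $C^{-}(u,r)=\{x\in\mathbb{R}^n: [x,u]\le r\}$. A convex body is a compact convex set with nonempty interior. $\mathcal{C}_e^n$ denotes the class of origin-symmetric convex bodies in $\mathbb{R}^n$ that are intersections of (a family of) closed solid cylinders $C^{-}(u,r)$, $u\in S^{n-1}$, $r>0$. *)

From mathcomp Require Import all_boot all_order all_algebra.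
From mathcomp Require Import all_classical all_reals topology normedtype matrix_topology matrix_normedtype.
Set Implicit Arguments. Unset Strict Implicit. Unset Printing Implicit Defensive.
Import Order.TTheory GRing.Theory Num.Theory numFieldTopology.Exports numFieldNormedType.Exports.
Local Open Scope ring_scope.
Local Open Scope classical_set_scope.

Section Defs.
Variables (R : realType) (n : nat).
Implicit Types (x y u : 'rV[R]_n) (A : set 'rV[R]_n).

Definition dotv x y : R := \sum_(i < n) x ord0 i * y ord0 i.

Definition unit_vec u : Prop := dotv u u = 1.

Definition brk x y : R := Num.sqrt (dotv x x * dotv y y - (dotv x y) ^+ 2).

Definition cyl u (r : R) : set 'rV[R]_n := [set x | brk x u <= r].

Definition convex A : Prop :=
  forall x y (t : R), A x -> A y -> 0 <= t -> t <= 1 -> A (t *: x + (1 - t) *: y).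

Definition convex_body A : Prop :=
  compact A /\ convex A /\ (interior A !=set0).

Definition origin_symmetric A : Prop := forall x, A x -> A (- x).

Definition class_Ce A : Prop :=
  convex_body A /\ origin_symmetric A /\
  exists F : set ('rV[R]_n * R),
    (forall p, F p -> unit_vec p.1 /\ 0 < p.2) /\
    A = \bigcap_(p in F) cyl p.1 p.2.

End Defs.

From mathcomp Require Import all_boot all_order all_algebra.
From mathcomp Require Import all_classical all_reals topology normedtype matrix_topology matrix_normedtype.
From mathcomp Require Import ring lra.
Import Order.TTheory GRing.Theory Num.Theory numFieldTopology.Exports numFieldNormedType.Exports.
Local Open Scope ring_scope.
Local Open Scope classical_set_scope.

(** For a unit vector [u], [[x,u]^2 = |x|^2 - (x.u)^2] is a continuous
positive semidefinite quadratic form in [x], so each cylinder is a closed,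
convex, origin-symmetric sublevel set of it containing a neighbourhood of the
origin.  Compactness of the intersection of two cylinders comes from a Bessel
inequality for two unit vectors, [(x.u)^2 + (x.v)^2 <= (1 + |u.v|) |x|^2]:
adding the two cylinder constraints gives [(1 - |u.v|) |x|^2 <= r1^2 + r2^2],
and [|u.v| < 1] exactly when [u] and [v] are not parallel. *)

Section DotProduct.
Context {R : realType} {n : nat}.
Implicit Types (x y z : 'rV[R]_n).

Lemma dotvC x y : dotv x y = dotv y x.
Proof. by apply: eq_bigr => i _; rewrite mulrC. Qed.

Lemma dotvDl x y z : dotv (x + y) z = dotv x z + dotv y z.
Proof. by rewrite /dotv -big_split; apply: eq_bigr => i _; rewrite mxE mulrDl. Qed.

Lemma dotvZl (a : R) x z : dotv (a *: x) z = a * dotv x z.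
Proof. by rewrite /dotv mulr_sumr; apply: eq_bigr => i _; rewrite mxE mulrA. Qed.

Lemma dotvNl x z : dotv (- x) z = - dotv x z.
Proof. by rewrite -scaleN1r dotvZl mulN1r. Qed.

Lemma dotvDr x y z : dotv z (x + y) = dotv z x + dotv z y.
Proof. by rewrite dotvC dotvDl !(dotvC z). Qed.

Lemma dotvZr (a : R) x z : dotv z (a *: x) = a * dotv z x.
Proof. by rewrite dotvC dotvZl dotvC. Qed.

Lemma dotvNr x z : dotv z (- x) = - dotv z x.
Proof. by rewrite dotvC dotvNl dotvC. Qed.

Lemma dotv0l x : dotv 0 x = 0.
Proof. by rewrite /dotv big1 // => i _; rewrite mxE mul0r. Qed.

Definition dotvE := (dotvDl, dotvDr, dotvZl, dotvZr, dotvNl, dotvNr).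

Lemma sqr_coord_le_dotv x i : x ord0 i ^+ 2 <= dotv x x.
Proof.
rewrite /dotv (bigD1 i) //= -expr2 lerDl.
by apply: sumr_ge0 => j _; rewrite -expr2 sqr_ge0.
Qed.

Lemma dotv_ge0 x : 0 <= dotv x x.
Proof. by apply: sumr_ge0 => i _; rewrite -expr2 sqr_ge0. Qed.

Lemma dotv_eq0 x : dotv x x = 0 -> x = 0.
Proof.
move=> x0; apply/rowP => i; rewrite mxE; apply/eqP.
by rewrite -sqrf_eq0 eq_le sqr_ge0 andbT -x0 sqr_coord_le_dotv.
Qed.

Lemma cauchy_schwarz x y : dotv x y ^+ 2 <= dotv x x * dotv y y.
Proof.
have [y0|y_neq0] := eqVneq (dotv y y) 0.
  by rewrite y0 mulr0 (dotv_eq0 _ y0) dotvC dotv0l expr0n.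
have y_gt0 : 0 < dotv y y by rewrite lt_def y_neq0 dotv_ge0.
have := dotv_ge0 (dotv y y *: x - dotv x y *: y).
rewrite !dotvE (dotvC y x) => h.
have : 0 <= dotv y y * (dotv y y * dotv x x - dotv x y ^+ 2) by nra.
by rewrite pmulr_rge0 // subr_ge0 mulrC.
Qed.

Lemma normr_le_sqrt_dotv x : `|x| <= Num.sqrt (dotv x x).
Proof.
rewrite [leLHS]/Num.norm /= mx_normrE; apply: bigmax_le; first exact: sqrtr_ge0.
move=> [i j] _; rewrite [i]ord1 /= -sqrtr_sqr ler_sqrt ?dotv_ge0 //.
exact: sqr_coord_le_dotv.
Qed.

Lemma dotv_bounded_set (A : set 'rV[R]_n) (K : R) :
  (forall x, A x -> dotv x x <= K) -> bounded_set A.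
Proof.
move=> AK; exists (Num.sqrt K); split; first exact: num_real.
move=> M KM x /AK xK; apply: le_trans (normr_le_sqrt_dotv x) _.
by apply: le_trans (ltW KM); rewrite ler_sqrt // (le_trans (dotv_ge0 x)).
Qed.

Lemma continuous_sum (f : 'I_n -> 'rV[R]_n -> R) :
  (forall i, continuous (f i)) -> continuous (fun x => \sum_(i < n) f i x).
Proof.
move=> f_cont; rewrite -fct_sumE.
apply: (big_ind (fun g : 'rV[R]_n -> R => continuous g)) => //.
- by move=> x; exact: cst_continuous.
- by move=> g h g_cont h_cont x; exact: continuousD (g_cont x) (h_cont x).
Qed.

Lemma dotv_continuous y : continuous (fun x : 'rV[R]_n => dotv x y).
Proof.
apply: continuous_sum => i x.
by apply: continuousM; [exact: coord_continuous | exact: cst_continuous].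
Qed.

Lemma dotvv_continuous : continuous (fun x : 'rV[R]_n => dotv x x).
Proof. by apply: continuous_sum => i x; apply: continuousM; exact: coord_continuous. Qed.

End DotProduct.

Section Cylinder.
Context {R : realType} {n : nat}.
Implicit Types (x y u v : 'rV[R]_n) (A B : set 'rV[R]_n).

Definition axis_sqdist u x := dotv x x - dotv x u ^+ 2.

Lemma axis_sqdist_ge0 u x : unit_vec u -> 0 <= axis_sqdist u x.
Proof. by move=> u1; rewrite subr_ge0 -[leRHS]mulr1 -u1 cauchy_schwarz. Qed.

Lemma axis_sqdistN u x : axis_sqdist u (- x) = axis_sqdist u x.
Proof. by rewrite /axis_sqdist dotvNl dotvNr dotvNl opprK sqrrN. Qed.

Lemma axis_sqdist_convex_comb u x y (t : R) :
  t * axis_sqdist u x + (1 - t) * axis_sqdist u y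
  - axis_sqdist u (t *: x + (1 - t) *: y) = t * (1 - t) * axis_sqdist u (x - y).
Proof. by rewrite /axis_sqdist !dotvE (dotvC y x); ring. Qed.

Lemma continuous_axis_sqdist u : continuous (axis_sqdist u).
Proof.
move=> x; apply: continuousB (dotvv_continuous x) _.
exact: continuousM (dotv_continuous u x) (dotv_continuous u x).
Qed.

Lemma cylE u (r : R) : unit_vec u -> 0 <= r ->
  cyl u r = [set x | axis_sqdist u x <= r ^+ 2].
Proof.
move=> u1 r0; have sqrt_le s : (Num.sqrt s <= r) = (s <= r ^+ 2).
  by rewrite -{1}(ger0_norm r0) -sqrtr_sqr ler_sqrt ?sqr_ge0.
rewrite /unit_vec in u1; apply/seteqP; split => x;
  by rewrite /cyl /brk /= u1 mulr1 sqrt_le.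
Qed.

Lemma cyl_convex u (r : R) : unit_vec u -> 0 <= r -> convex (cyl u r).
Proof.
move=> u1 r0; rewrite cylE // => x y t /= xr yr t0 t1.
have t_1t : 0 <= t * (1 - t) by rewrite mulr_ge0 // subr_ge0.
have := mulr_ge0 t_1t (axis_sqdist_ge0 u (x - y) u1).
rewrite -axis_sqdist_convex_comb subr_ge0 => /le_trans; apply.
have -> : r ^+ 2 = t * r ^+ 2 + (1 - t) * r ^+ 2 by ring.
by rewrite lerD // ler_wpM2l // subr_ge0.
Qed.

Lemma cyl_closed u (r : R) : unit_vec u -> 0 <= r -> closed (cyl u r).
Proof.
move=> u1 r0; rewrite cylE //.
apply: (@preimage_closed _ _ (axis_sqdist u) [set s | s <= r ^+ 2]).
  by move=> x _; exact: continuous_axis_sqdist.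
exact: closed_le.
Qed.

Lemma cyl_origin_symmetric u (r : R) : unit_vec u -> 0 <= r ->
  origin_symmetric (cyl u r).
Proof. by move=> u1 r0; rewrite cylE // => x /=; rewrite axis_sqdistN. Qed.

Lemma cyl_interior0 u (r : R) : unit_vec u -> 0 < r -> (cyl u r)° 0.
Proof.
move=> u1 r_gt0; rewrite cylE ?ltW //.
have small_open : open [set x | axis_sqdist u x < r ^+ 2].
  apply: (@open_comp _ _ (axis_sqdist u) [set s | s < r ^+ 2]); last exact: open_lt.
  by move=> x _; exact: continuous_axis_sqdist.
apply: filterS (open_nbhs_nbhs (conj small_open _)) => [x /ltW //|].
by rewrite /= /axis_sqdist !dotv0l expr0n subrr exprn_gt0.
Qed.

Lemma convexI A B : convex A -> convex B -> convex (A `&` B).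
Proof. by move=> cA cB x y t [Ax Bx] [Ay By] t0 t1; split; [exact: cA | exact: cB]. Qed.

Lemma origin_symmetricI A B :
  origin_symmetric A -> origin_symmetric B -> origin_symmetric (A `&` B).
Proof. by move=> sA sB x [Ax Bx]; split; [exact: sA | exact: sB]. Qed.

End Cylinder.

Section TwoCylinders.
Context {R : realType} {n : nat}.
Implicit Types (x u v : 'rV[R]_n).

Lemma sqr_dotv_pair_le u v x : unit_vec u -> unit_vec v ->
  dotv x u ^+ 2 + dotv x v ^+ 2 <= (1 + `|dotv u v|) * dotv x x.
Proof.
rewrite /unit_vec => u1 v1.
set a := dotv x u; set b := dotv x v; set c := dotv u v; set N := dotv x x.
have N_ge0 : 0 <= N := dotv_ge0 x.
have cross : 2 * a * b * c <= `|c| * (a ^+ 2 + b ^+ 2).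
  have [c_ge0|c_lt0] := lerP 0 c.
    by rewrite ger0_norm //; have := sqr_ge0 (a - b); nra.
  by rewrite ltr0_norm //; have := sqr_ge0 (a + b); nra.
(* Cauchy-Schwarz with the test vector [w = a u + b v], for which [x.w = a^2 + b^2]. *)
have := cauchy_schwarz x (a *: u + b *: v).
rewrite !dotvE u1 v1 (dotvC v u) -/a -/b -/c -/N => cs.
have k_ge0 := normr_ge0 c; set k := `|c| in cross k_ge0 *.
have : (a ^+ 2 + b ^+ 2) ^+ 2 <= N * (a ^+ 2 + b ^+ 2) * (1 + k).
  by apply: le_trans cs _; have := ler_wpM2l N_ge0 cross; lra.
have [->|S_neq0] := eqVneq (a ^+ 2 + b ^+ 2) 0; first by rewrite mulr_ge0 ?addr_ge0.
have S_gt0 : 0 < a ^+ 2 + b ^+ 2 by rewrite lt_def S_neq0 addr_ge0 ?sqr_ge0.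
by move=> S2_le; rewrite -(ler_pM2l S_gt0) -expr2; apply: le_trans S2_le _; lra.
Qed.

Lemma normr_dotv_lt1 u v : unit_vec u -> unit_vec v ->
  ~ (exists c : R, u = c *: v) -> `|dotv u v| < 1.
Proof.
rewrite /unit_vec => u1 v1 not_parallel.
have := cauchy_schwarz u v; rewrite u1 v1 mulr1 -real_normK ?num_real // expr_le1 //.
rewrite le_eqVlt => /orP[/eqP uv1|//]; exfalso; apply: not_parallel.
have uv2 : dotv u v ^+ 2 = 1 by rewrite -real_normK ?num_real // uv1 expr1n.
exists (dotv u v); apply/eqP; rewrite -subr_eq0; apply/eqP/dotv_eq0.
by rewrite !dotvE (dotvC v u) u1 v1; lra.
Qed.

Lemma cylI_dotv_le u v (r1 r2 : R) x : unit_vec u -> unit_vec v ->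
  0 <= r1 -> 0 <= r2 -> (cyl u r1 `&` cyl v r2) x ->
  (1 - `|dotv u v|) * dotv x x <= r1 ^+ 2 + r2 ^+ 2.
Proof.
move=> u1 v1 r1_ge0 r2_ge0; rewrite cylE // cylE // => -[/= xu xv].
have := sqr_dotv_pair_le u v x u1 v1; move: xu xv; rewrite /axis_sqdist; lra.
Qed.

Lemma cylI_bounded u v (r1 r2 : R) : unit_vec u -> unit_vec v ->
  ~ (exists c : R, u = c *: v) -> 0 <= r1 -> 0 <= r2 ->
  bounded_set (cyl u r1 `&` cyl v r2).
Proof.
move=> u1 v1 not_parallel r1_ge0 r2_ge0.
have gap : 0 < 1 - `|dotv u v| by rewrite subr_gt0 normr_dotv_lt1.
apply: (@dotv_bounded_set _ _ _ ((r1 ^+ 2 + r2 ^+ 2) / (1 - `|dotv u v|))) => x Ax.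
by rewrite ler_pdivlMr // mulrC cylI_dotv_le.
Qed.

Lemma cylI_convex_body u v (r1 r2 : R) : unit_vec u -> unit_vec v ->
  ~ (exists c : R, u = c *: v) -> 0 < r1 -> 0 < r2 ->
  convex_body (cyl u r1 `&` cyl v r2).
Proof.
move=> u1 v1 not_parallel r1_gt0 r2_gt0.
have r1_ge0 := ltW r1_gt0; have r2_ge0 := ltW r2_gt0.
split; [|split].
- apply: bounded_closed_compact; first exact: cylI_bounded.
  by apply: closedI; exact: cyl_closed.
- by apply: convexI; exact: cyl_convex.
- by exists 0; rewrite interiorI; split; exact: cyl_interior0.
Qed.

End TwoCylinders.

Theorem proposition3p2 (R : realType) (n : nat) (r1 r2 : R) (u v : 'rV[R]_n) :
  (2 <= n)%N -> 0 < r1 -> 0 < r2 ->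
  unit_vec u -> unit_vec v ->
  ~ (exists c : R, u = c *: v) ->
  class_Ce (cyl u r1 `&` cyl v r2).
Proof.
move=> _ r1_gt0 r2_gt0 u1 v1 not_parallel.
split; [exact: cylI_convex_body | split].
  by apply: origin_symmetricI; apply: cyl_origin_symmetric; rewrite // ltW.
exists ((u, r1) |` [set (v, r2)]); split.
  by move=> p [->|->].
by rewrite bigcap_setU1 bigcap_set1.
Qed.
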